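(* Let $N \ge 2$ and let $\alpha = (\alpha_1,\dots,\alpha_N) : \mathbb{R}^{3N} \to \mathbb{R}^N$ be a $C^\infty$ map. Then the sortlet $\Psi_\alpha : \mathbb{R}^{3N} \to \mathbb{R}$ (defined in the context) is continuously once-differentiable on $\mathbb{R}^{3N}$, i.e. all first partial derivatives $\partial \Psi_\alpha / \partial r^i$ exist and are continuous on $\mathbb{R}^{3N}$.
   Context: Write points of $\mathbb{R}^{3N}$ as $r = (r_1,\dots,r_N)$ with $r_i \in \mathbb{R}^3$. Sortlet: at a configuration $r$ where the values $\alpha_1(r),\dots,\alpha_N(r)$ are pairwise distinct, let $\pi_\alpha$ be the unique permutation of $\{1,\dots,N\}$ with $\alpha_{\pi_\alpha(1)}(r) < \dots < \alpha_{\pi_\alpha(N)}(r)$ (the permutation sorting $\alpha(r)$), and set $$\Psi_\alpha(r) = \sigma(\pi_\alpha) \prod_{i=1}^{N-1} \big(\alpha_{\pi_\alpha(i+1)}(r) - \alpha_{\pi_\alpha(i)}(r)\big),$$ where $\sigma(\pi) \in \{+1,-1\}$ is the sign (parity) of $\pi$. At configurations where two of the values $\alpha_i(r)$ coincide, the product of consecutive sorted differences vanishes and $\Psi_\alpha(r) = 0$. *)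

From HB Require Import structures.
From mathcomp Require Import all_boot all_order all_algebra all_fingroup.
From mathcomp Require Import all_classical all_reals all_analysis.
Set Implicit Arguments. Unset Strict Implicit. Unset Printing Implicit Defensive.
Import Order.TTheory GRing.Theory Num.Theory.
Import numFieldNormedType.Exports.
Local Open Scope ring_scope.

Definition basis_vec (R : realType) (d : nat) (j : 'I_d) : 'rV[R]_d :=
  delta_mx 0 j.

(* Iterated partial derivatives along the coordinate directions listed in js
   (innermost derivative = last element of the list). *)
Fixpoint iter_partial (R : realType) (d : nat) (js : seq 'I_d)
  (f : 'rV[R]_d -> R) : 'rV[R]_d -> R :=
  match js with
  | [::] => f
  | j :: js' => fun x => derive (iter_partial js' f) x (basis_vec R j)
  end.

Definition smooth (R : realType) (d : nat) (f : 'rV[R]_d -> R) : Prop :=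
  forall js : seq 'I_d,
    continuous (iter_partial js f) /\
    forall (j : 'I_d) (x : 'rV[R]_d),
      derivable (iter_partial js f) x (basis_vec R j).

(* Value at a natural index (0 outside range). *)
Definition at_nat (R : realType) (N : nat) (v : 'I_N -> R) (n : nat) : R :=
  match insub n with Some i => v i | None => 0 end.

(* At r, if some permutation pi sorts
   alpha(r) strictly increasingly (i.e. the values are pairwise distinct),
   Psi = sign(pi) * prod_{i=1}^{N-1} (alpha_{pi(i+1)} - alpha_{pi(i)});
   otherwise (two values coincide) Psi = 0. *)
Definition sortlet (R : realType) (N : nat)
  (alpha : 'rV[R]_(3 * N) -> 'I_N -> R) (r : 'rV[R]_(3 * N)) : R :=
  match [pick s : 'S_N | [forall i : 'I_N, forall j : 'I_N,
            (i < j)%N ==> (alpha r (s i) < alpha r (s j))]] with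
  | Some s =>
      (-1) ^+ (odd_perm s) *
      \prod_(i < N.-1)
        (at_nat (fun k => alpha r (s k)) i.+1 - at_nat (fun k => alpha r (s k)) i)
  | None => 0
  end.

From HB Require Import structures.
From mathcomp Require Import all_boot all_order all_algebra all_fingroup.
From mathcomp Require Import all_classical all_reals all_analysis.
From mathcomp Require Import zify.
Import Order.TTheory GRing.Theory Num.Theory.
Import numFieldNormedType.Exports.
Set Implicit Arguments. Unset Strict Implicit. Unset Printing Implicit Defensive.
Local Open Scope ring_scope.

(* A permutation t weakly sorts b when b o t is nondecreasing.  For every t
   weakly sorting alpha(r) the sortlet equals
   sign(t) * prod_i (alpha_{t(i+1)}(r) - alpha_{t(i)}(r)), both sides vanishing
   when there is a tie.  For r near r0 every weak sort of alpha(r) also weakly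
   sorts alpha(r0), so near r0 the sortlet is one of finitely many smooth
   pieces, and it is C^1 once the pieces attached to the weak sorts of
   alpha(r0) have equal partial derivatives at r0.  They do: if two gaps of
   the sorted vector vanish at r0 all these derivatives vanish; if exactly one
   gap vanishes, two weak sorts differ at most by the transposition of the
   tied pair, which flips both the sign of the permutation and the derivative
   of the vanishing gap; if no gap vanishes the weak sort is unique. *)

Section WeakSort.
Variables (d : Order.disp_t) (T : orderType d) (N : nat).
Implicit Types (a : 'I_N -> T) (s t : 'S_N).

Definition sorts a s := forall i j : 'I_N, (i <= j)%N -> (a (s i) <= a (s j))%O.

Lemma perm_map_enum s : perm_eq (map s (enum 'I_N)) (enum 'I_N).
Proof.
apply: uniq_perm; rewrite ?(map_inj_uniq perm_inj) ?enum_uniq // => x.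
by rewrite mem_enum; apply/mapP; exists (s^-1 x)%g; rewrite ?mem_enum ?permKV.
Qed.

Lemma sorts_sorted a s : sorts a s -> sorted <=%O (map (a \o s) (enum 'I_N)).
Proof.
move=> sa; apply: pairwise_sorted; rewrite pairwise_map.
have: pairwise (fun i j : 'I_N => (i <= j)%N) (enum 'I_N).
  have := pairwise_map val (fun i j => (i <= j)%N) (enum 'I_N).
  rewrite val_enum_ord => <-.
  by rewrite -sorted_pairwise; [exact: iota_sorted | exact: leq_trans].
by apply: sub_pairwise => i j /sa.
Qed.

Lemma sorts_eq a s t : sorts a s -> sorts a t -> a \o s =1 a \o t.
Proof.
move=> sa ta.
have: map (a \o s) (enum 'I_N) = map (a \o t) (enum 'I_N).
  apply: le_sorted_eq; [exact: sorts_sorted | exact: sorts_sorted |].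
  rewrite (map_comp a s) (map_comp a t); apply: perm_trans (perm_map a (perm_map_enum s)) _.
  by rewrite perm_sym; exact: perm_map (perm_map_enum t).
by move/eq_in_map => E i; apply: E; rewrite mem_enum.
Qed.

Lemma sorts_exists a : exists s, sorts a s.
Proof.
pose leT i j := (a i <= a j)%O.
pose l := sort leT (enum 'I_N).
have size_l : size l = N by rewrite size_sort size_enum_ord.
have uniq_l : uniq l by rewrite sort_uniq enum_uniq.
have sorted_l : sorted leT l by apply: sort_sorted => i j; exact: le_total.
pose f i := nth i l i.
have fE i j : f i = nth j l i by apply: set_nth_default; rewrite size_l.
have f_inj : injective f.
  by move=> i j; rewrite (fE i j) /f => /eqP; rewrite nth_uniq ?size_l // => /eqP/val_inj.
exists (perm f_inj) => i j ij; rewrite !permE (fE i j).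
apply: (sorted_leq_nth (leT := leT)) => //; rewrite ?inE ?size_l //.
- by move=> x y z; exact: le_trans.
- by move=> x; exact: lexx.
Qed.

Lemma sorts_between a s (i l j : 'I_N) : sorts a s -> (i <= l <= j)%N ->
  a (s i) = a (s j) -> a (s l) = a (s i).
Proof.
move=> sa /andP[il lj] eij; apply/le_anti/andP; split; last exact: sa.
by rewrite eij; exact: sa.
Qed.

End WeakSort.

Lemma perm_fixing_all_but_two (T : finType) (x y : T) (g : {perm T}) :
  (forall k, k != x -> k != y -> g k = k) -> g = 1%g \/ g = tperm x y.
Proof.
move=> gfix.
have g_pair k : (k == x) || (k == y) -> (g k == x) || (g k == y).
  apply: contraTT; rewrite negb_or => /andP[gkx gky].
  by have /perm_inj <- := gfix _ gkx gky; rewrite negb_or gkx gky.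
have gy : (g y == x) || (g y == y) by apply: g_pair; rewrite eqxx orbT.
have [gxx|gxx] := eqVneq (g x) x; [left|right]; apply/permP => k.
- rewrite perm1; have [->//|kx] := eqVneq k x.
  have [ky|ky] := eqVneq k y; last exact: gfix.
  rewrite ky in kx *.
  by move: gy; rewrite -{1}gxx (inj_eq perm_inj) (negbTE kx) => /eqP.
- have gxy : g x = y.
    by move: (g_pair x); rewrite eqxx (negbTE gxx) /= => /(_ isT) /eqP.
  have gyy : g y != y by rewrite -{2}gxy (inj_eq perm_inj) -gxy.
  case: tpermP => [->|->|/eqP kx /eqP ky] //; last exact: gfix.
  by move: gy; rewrite (negbTE gyy) orbF => /eqP.
Qed.

Section Gaps.
Variables (R : realType) (N : nat).
Implicit Types (a v : 'I_N -> R) (s t : 'S_N).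

Definition gap a s (k : nat) : R :=
  at_nat (fun m => a (s m)) k.+1 - at_nat (fun m => a (s m)) k.

Definition signed_gap_prod a s : R := (-1) ^+ s * \prod_(k < N.-1) gap a s k.

Lemma at_natE v (k : 'I_N) : at_nat v k = v k.
Proof. by rewrite /at_nat valK. Qed.

Lemma gap_hi_subproof (k : 'I_N.-1) : (k.+1 < N)%N.
Proof. by rewrite -ltn_predRL. Qed.

Definition gap_lo (k : 'I_N.-1) : 'I_N := widen_ord (leq_pred N) k.
Definition gap_hi (k : 'I_N.-1) : 'I_N := Ordinal (gap_hi_subproof k).

Lemma gapE a s (k : 'I_N.-1) : gap a s k = a (s (gap_hi k)) - a (s (gap_lo k)).
Proof. by rewrite /gap (at_natE _ (gap_hi k)) (at_natE _ (gap_lo k)). Qed.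

Lemma eq_gap a s t : a \o s =1 a \o t -> gap a s =1 gap a t.
Proof.
move=> E k; rewrite /gap.
by have -> : (fun m => a (s m)) = (fun m => a (t m)) by exact: funext E.
Qed.

Lemma sorts_tie_gap a s (m k : 'I_N) (l : nat) : sorts a s -> (m <= l < k)%N ->
  a (s m) = a (s k) -> gap a s l = 0.
Proof.
move=> sa mlk e.
have lo_lt : (l < N)%N by have := ltn_ord k; lia.
have hi_lt : (l.+1 < N)%N by have := ltn_ord k; lia.
have hi_tie : a (s (Ordinal hi_lt)) = a (s m).
  by apply: sorts_between sa _ e => /=; lia.
have lo_tie : a (s (Ordinal lo_lt)) = a (s m).
  by apply: sorts_between sa _ e => /=; lia.
rewrite /gap (at_natE _ (Ordinal hi_lt)) (at_natE _ (Ordinal lo_lt)).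
by rewrite hi_tie lo_tie subrr.
Qed.

Lemma sorts_tie_gap_eq0 a s (i j : 'I_N) : sorts a s -> (i < j)%N ->
  a (s i) = a (s j) -> exists k : 'I_N.-1, gap a s k = 0.
Proof.
move=> sa ij e; have i_lt : (i < N.-1)%N by have := ltn_ord j; lia.
by exists (Ordinal i_lt); apply: sorts_tie_gap sa _ e; rewrite /= leqnn.
Qed.

Lemma signed_gap_prod_eq0 a s (k : 'I_N.-1) : gap a s k = 0 -> signed_gap_prod a s = 0.
Proof. by move=> gk; rewrite /signed_gap_prod (bigD1 k) //= gk mul0r mulr0. Qed.

Lemma sorts_gap_neq0_perm_eq a s t : sorts a s -> sorts a t ->
  (forall k : 'I_N.-1, gap a s k != 0) -> s = t.
Proof.
move=> sa ta gap_neq0.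
have a_inj : injective a.
  move=> x y axy; have e : a (s (s^-1 x)%g) = a (s (s^-1 y)%g) by rewrite !permKV.
  have [lt|lt|/val_inj/(congr1 s)] := ltngtP (s^-1 x)%g (s^-1 y)%g; last by rewrite !permKV.
  - by have [k /eqP] := sorts_tie_gap_eq0 sa lt e; rewrite (negbTE (gap_neq0 k)).
  - by have [k /eqP] := sorts_tie_gap_eq0 sa lt (esym e); rewrite (negbTE (gap_neq0 k)).
by apply/permP => i; apply: a_inj; exact: sorts_eq sa ta i.
Qed.

Lemma signed_gap_prod_sorts_eq a s t : sorts a s -> sorts a t ->
  signed_gap_prod a s = signed_gap_prod a t.
Proof.
move=> sa ta.
have [k /eqP gk|gap_neq0] := pickP (fun k : 'I_N.-1 => gap a s k == 0).
  rewrite (signed_gap_prod_eq0 gk) (@signed_gap_prod_eq0 a t k) //.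
  by rewrite -(eq_gap (sorts_eq sa ta)).
by rewrite (sorts_gap_neq0_perm_eq sa ta (fun k => negbT (gap_neq0 k))).
Qed.

Lemma sortletE (alpha : 'rV[R]_(3 * N) -> 'I_N -> R) r t :
  sorts (alpha r) t -> sortlet alpha r = signed_gap_prod (alpha r) t.
Proof.
move=> ta; rewrite /sortlet; case: pickP => [s /forallP s_incr | no_sort].
  rewrite -/(signed_gap_prod (alpha r) s); apply: (signed_gap_prod_sorts_eq _ ta).
  move=> i j; rewrite leq_eqVlt => /orP[/eqP/val_inj -> //|ij].
  by have /forallP/(_ j) := s_incr i; rewrite ij /= => /ltW.
have /negbT/forallPn[i /forallPn[j]] := no_sort t.
rewrite negb_imply -leNgt => /andP[ij ji].
have tie : alpha r (t i) = alpha r (t j).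
  by apply/le_anti; rewrite ji andbT; exact: ta (ltnW ij).
by have [k /signed_gap_prod_eq0] := sorts_tie_gap_eq0 ta ij tie.
Qed.

Section SingleTie.
Variables (a : 'I_N -> R) (s : 'S_N) (k0 : 'I_N.-1).
Hypotheses (sa : sorts a s) (gap_eq0 : forall k : 'I_N.-1, gap a s k = 0 -> k = k0).

Lemma sorts_single_tie (m k : 'I_N) : (m < k)%N -> a (s m) = a (s k) ->
  m = gap_lo k0 /\ k = gap_hi k0.
Proof.
move=> mk e.
have between_k0 (l : nat) : (m <= l < k)%N -> l = k0.
  move=> mlk; have l_lt : (l < N.-1)%N by have := ltn_ord k; lia.
  by have /gap_eq0/(congr1 val) := sorts_tie_gap (l := Ordinal l_lt) sa mlk e.
have m_k0 : m = k0 :> nat by apply: between_k0; rewrite leqnn.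
have k_k0 : k.-1 = k0 by apply: between_k0; lia.
by split; apply: val_inj => /=; lia.
Qed.

Lemma sorts_single_tie_perm t : sorts a t -> t = s \/ t = (tperm (gap_lo k0) (gap_hi k0) * s)%g.
Proof.
move=> ta.
have [g1|gtp] : (t * s^-1 = 1 \/ t * s^-1 = tperm (gap_lo k0) (gap_hi k0))%g.
  apply: perm_fixing_all_but_two => k klo khi; rewrite permM.
  have tie : a (s ((s^-1)%g (t k))) = a (s k) by rewrite permKV; exact/esym/(sorts_eq sa ta).
  have [lt|lt|/val_inj//] := ltngtP ((s^-1)%g (t k)) k.
  - by have [_ kE] := sorts_single_tie lt tie; rewrite kE eqxx in khi.
  - by have [kE _] := sorts_single_tie lt (esym tie); rewrite kE eqxx in klo.
- by left; rewrite -[t](mulgKV s) g1 mul1g.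
- by right; rewrite -[t](mulgKV s) gtp.
Qed.

Lemma sorts_single_tie_signed_gap t v : sorts a t ->
  (-1) ^+ t * gap v t k0 = (-1) ^+ s * gap v s k0.
Proof.
move=> ta; have [->//|->] := sorts_single_tie_perm ta.
have lo_hi : gap_lo k0 != gap_hi k0 by apply/eqP => /(congr1 val) /=; lia.
rewrite odd_permM odd_tperm lo_hi signr_addb expr1 !gapE !permM tpermL tpermR.
by rewrite mulN1r mulNr -mulrN opprB.
Qed.

End SingleTie.

End Gaps.

Section DirectionalC1.
Variables (R : realType) (V : normedModType R) (e : V).

Definition C1_along (f : V -> R) :=
  [/\ continuous f, forall x, derivable f x e & continuous (fun x => derive f x e)].

Lemma C1_along_cst (c : R) : C1_along (fun _ => c).
Proof.
split; [exact: cst_continuous | by move=> x; exact: derivable_cst |].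
by under eq_fun do rewrite derive_cst; exact: cst_continuous.
Qed.

Lemma C1_alongB f g : C1_along f -> C1_along g -> C1_along (fun x => f x - g x).
Proof.
move=> [cf df cdf] [cg dg cdg]; split => [x|x|].
- exact: continuousB (cf x) (cg x).
- exact: derivableB (df x) (dg x).
- under eq_fun do rewrite deriveB //.
  by move=> x; exact: continuousB (cdf x) (cdg x).
Qed.

Lemma C1_alongM f g : C1_along f -> C1_along g -> C1_along (fun x => f x * g x).
Proof.
move=> [cf df cdf] [cg dg cdg]; split => [x|x|].
- exact: continuousM (cf x) (cg x).
- exact: derivableM (df x) (dg x).
- under eq_fun do rewrite deriveM //.
  move=> x; exact: continuousD (continuousM (cf x) (cdg x)) (continuousM (cg x) (cdf x)).
Qed.

Lemma C1_along_prod (I : Type) (r : seq I) (P : pred I) (F : I -> V -> R) :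
  (forall i, C1_along (F i)) -> C1_along (fun x => \prod_(i <- r | P i) F i x).
Proof.
move=> F_C1; elim: r => [|i r IH].
  by under eq_fun do rewrite big_nil; exact: C1_along_cst.
under eq_fun do rewrite big_cons.
by case: (P i); [exact: C1_alongM (F_C1 i) IH | exact: IH].
Qed.

Lemma derive_prod_root (m : nat) (F : 'I_m -> V -> R) (k : 'I_m) x :
  (forall i, C1_along (F i)) -> F k x = 0 ->
  derive (fun y => \prod_(i < m) F i y) x e =
  derive (F k) x e * \prod_(i < m | i != k) F i x.
Proof.
move=> F_C1 Fkx.
under eq_fun do rewrite (bigD1 k) //=.
have [_ dFk _] := F_C1 k.
have [_ dprod _] := C1_along_prod (index_enum 'I_m) (fun i => i != k) F_C1.
by rewrite deriveM // Fkx scale0r add0r mulrC.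
Qed.

Lemma near_line (x0 : V) (Q : V -> Prop) : (\forall x \near x0, Q x) ->
  \forall h \near ((0 : R)^')%classic, Q (h *: e + x0).
Proof.
have line_cont : {for 0, continuous (fun h : R => h *: e + x0)}.
  by apply: continuousD; [exact: scalel_continuous | exact: cst_continuous].
by have := (continuous_withinNx _ _).1 line_cont; rewrite scale0r add0r; apply.
Qed.

End DirectionalC1.

Section PiecewiseC1.
Variables (R : realType) (V : normedModType R) (e : V) (I : finType).
Variables (f : V -> R) (g : I -> V -> R) (P : V -> I -> Prop).
Hypotheses (g_C1 : forall i, C1_along e (g i)) (P_ex : forall x, exists i, P x i).
Hypothesis f_eq : forall x i, P x i -> f x = g i x.
Hypothesis P_near : forall x0, \forall x \near x0, forall i, P x i -> P x0 i.
Hypothesis derive_g_eq :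
  forall x i k, P x i -> P x k -> derive (g i) x e = derive (g k) x e.

Lemma piecewise_derive_cvg x0 i0 : P x0 i0 ->
  (h^-1 *: ((f \o shift x0) (h *: e) - f x0) @[h --> (0 : R)^'] --> derive (g i0) x0 e)%classic.
Proof.
move=> Pi0; apply/cvgrPdist_lt => eps eps0.
have near_g i : \forall h \near ((0 : R)^')%classic, P x0 i ->
    `|derive (g i0) x0 e - h^-1 *: ((g i \o shift x0) (h *: e) - g i x0)| < eps.
  have [Pi|nPi] := pselect (P x0 i); last by apply: nearW => h /nPi.
  rewrite (derive_g_eq Pi0 Pi); have [_ dg _] := g_C1 i.
  by apply: filterS ((cvgrPdist_lt _ _).1 (dg x0) _ eps0) => h + _.
apply: filterS2 (filter_forall _ near_g) (near_line e (P_near x0)) => h gh Ph.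
have [i Pi] := P_ex (h *: e + x0).
by rewrite /= (f_eq Pi) (f_eq (Ph _ Pi)); exact: gh (Ph _ Pi).
Qed.

Lemma piecewise_deriveE x i : P x i -> derive f x e = derive (g i) x e.
Proof. by move=> Pi; apply: cvg_lim (piecewise_derive_cvg Pi). Qed.

Lemma piecewise_C1 : (forall x, derivable f x e) /\ continuous (fun x => derive f x e).
Proof.
split=> [x|x0].
  have [i Pi] := P_ex x.
  by apply/cvg_ex; exists (derive (g i) x e); exact: piecewise_derive_cvg.
apply/cvgrPdist_lt => eps eps0.
have near_g i : \forall x \near x0, `|derive (g i) x0 e - derive (g i) x e| < eps.
  by have [_ _ cdg] := g_C1 i; exact: (cvgrPdist_lt _ _).1 (cdg x0) _ eps0.
apply: filterS2 (filter_forall _ near_g) (P_near x0) => x gx Px.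
have [i Pi] := P_ex x.
by rewrite /= (piecewise_deriveE Pi) (piecewise_deriveE (Px _ Pi)); exact: gx.
Qed.

End PiecewiseC1.

Section SortletPieces.
Variables (R : realType) (V : normedModType R) (N : nat) (a : V -> 'I_N -> R).

Lemma near_sorts x0 : (forall i, continuous (a^~ i)) ->
  \forall x \near x0, forall t, sorts (a x) t -> sorts (a x0) t.
Proof.
move=> a_cont.
have near_lt (p : 'I_N * 'I_N) :
    \forall x \near x0, a x0 p.1 < a x0 p.2 -> a x p.1 < a x p.2.
  have [lt|_] := boolP (a x0 p.1 < a x0 p.2); last by apply: nearW.
  have diff_cont : {for x0, continuous (fun x => a x p.2 - a x p.1)}.
    exact: continuousB (a_cont p.2 x0) (a_cont p.1 x0).
  have pos : 0 < a x0 p.2 - a x0 p.1 by rewrite subr_gt0.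
  by apply: filterS (cvgr_gt _ diff_cont _ pos) => x; rewrite subr_gt0.
apply: filterS (filter_forall _ near_lt) => x lt_x t sx i j ij.
rewrite leNgt; apply/negP => /(lt_x (t j, t i)) /=.
by rewrite ltNge (sx _ _ ij).
Qed.

Variable e : V.
Hypothesis a_C1 : forall i, C1_along e (a^~ i).

Lemma C1_along_gap t (k : nat) : C1_along e (fun x => gap (a x) t k).
Proof.
have at_nat_C1 l : C1_along e (fun x => at_nat (fun m => a x (t m)) l).
  by rewrite /at_nat; case: insub => [m|]; [exact: a_C1 | exact: C1_along_cst].
exact: C1_alongB.
Qed.

Lemma C1_along_signed_gap_prod t : C1_along e (fun x => signed_gap_prod (a x) t).
Proof.
apply: (C1_alongM (C1_along_cst _ _)).
exact: (C1_along_prod _ _ (fun k : 'I_N.-1 => C1_along_gap t k)).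
Qed.

Lemma derive_gap t x (k : 'I_N.-1) :
  derive (fun y => gap (a y) t k) x e = gap (fun m => derive (a^~ m) x e) t k.
Proof.
under eq_fun do rewrite gapE.
have [_ d_hi _] := a_C1 (t (gap_hi k)); have [_ d_lo _] := a_C1 (t (gap_lo k)).
by rewrite gapE deriveB.
Qed.

Lemma derive_signed_gap_prod_root t x (k0 : 'I_N.-1) : gap (a x) t k0 = 0 ->
  derive (fun y => signed_gap_prod (a y) t) x e =
  (-1) ^+ t * gap (fun m => derive (a^~ m) x e) t k0 *
    \prod_(k < N.-1 | k != k0) gap (a x) t k.
Proof.
move=> gap0.
have [_ d_prod _] :=
  C1_along_prod (index_enum 'I_N.-1) xpredT (fun k : 'I_N.-1 => C1_along_gap t k).
rewrite /signed_gap_prod (deriveMl _ (d_prod x)) -mulrA -derive_gap.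
by rewrite (derive_prod_root (F := fun (k : 'I_N.-1) y => gap (a y) t k)
  (fun k => C1_along_gap t k) gap0).
Qed.

Lemma derive_signed_gap_prod_sorts_eq x s t : sorts (a x) s -> sorts (a x) t ->
  derive (fun y => signed_gap_prod (a y) s) x e =
  derive (fun y => signed_gap_prod (a y) t) x e.
Proof.
move=> sa ta; have E := sorts_eq sa ta.
have [k0 /eqP gap0|gap_neq0] := pickP (fun k : 'I_N.-1 => gap (a x) s k == 0);
  last by rewrite (sorts_gap_neq0_perm_eq sa ta (fun k => negbT (gap_neq0 k))).
have gap0_t : gap (a x) t k0 = 0 by rewrite -(eq_gap E).
rewrite (derive_signed_gap_prod_root gap0) (derive_signed_gap_prod_root gap0_t).
have -> : \prod_(k < N.-1 | k != k0) gap (a x) t k =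
          \prod_(k < N.-1 | k != k0) gap (a x) s k.
  by apply: eq_bigr => k _; rewrite (eq_gap E).
have [k1 /andP[k10 /eqP gap1]|single] :=
  pickP (fun k : 'I_N.-1 => (k != k0) && (gap (a x) s k == 0)).
  by rewrite (bigD1 k1) //= gap1 !mul0r !mulr0.
congr (_ * _); apply/esym/(sorts_single_tie_signed_gap sa) => // k gap0_k.
by apply/eqP; apply: contraT => kk0; have := single k; rewrite kk0 gap0_k eqxx.
Qed.

End SortletPieces.

Lemma smooth_C1_along (R : realType) (d : nat) (f : 'rV[R]_d -> R) (j : 'I_d) :
  smooth f -> C1_along (basis_vec R j) f.
Proof.
move=> f_smooth; have [f_cont f_der] := f_smooth [::].
by split; [exact: f_cont | exact: f_der j | exact: (f_smooth [:: j]).1].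
Qed.

Theorem mainTheorem2 (R : realType) (N : nat) (hN : (2 <= N)%N)
  (alpha : 'rV[R]_(3 * N) -> 'I_N -> R)
  (halpha : forall i : 'I_N, smooth (fun r => alpha r i)) :
  forall j : 'I_(3 * N),
    (forall r : 'rV[R]_(3 * N), derivable (sortlet alpha) r (basis_vec R j)) /\
    continuous (fun r : 'rV[R]_(3 * N) => derive (sortlet alpha) r (basis_vec R j)).
Proof.
move=> j; have alpha_C1 i := smooth_C1_along j (halpha i).
apply: (@piecewise_C1 _ _ _ _ _ (fun t r => signed_gap_prod (alpha r) t)
  (fun r t => sorts (alpha r) t)).
- exact: C1_along_signed_gap_prod.
- by move=> r; exact: sorts_exists.
- by move=> r t; exact: sortletE.
- by move=> r0; apply: near_sorts => i; have [] := alpha_C1 i.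
- by move=> r s t; exact: derive_signed_gap_prod_sorts_eq.
Qed.
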